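(* Let $n\ge 1$, let $\bar{X}_T=(X_T^1,\dots,X_T^n)$ be a random vector with values in $[0,\infty)^n$ and $\mathbb{Q}$ a pricing measure. For $0<p<\infty$ define $$h_p(\bar{x},\bar{K},K)=\left(\left(\sum_{i=1}^{n}\big((x_i-K_i)^{+}\big)^p\right)^{1/p}-K\right)^{+},\qquad \bar{x},\bar{K}\in[0,\infty)^n,\ K\ge0,$$ let $h_\infty=\lim_{p\to\infty}h_p$ pointwise (so $h_\infty(\bar{x},\bar{K},K)=(\max_i(x_i-K_i)^+-K)^+$), and set $V^p(\bar{K},K)=\mathbb{E}_{\mathbb{Q}}[h_p(\bar{X}_T,\bar{K},K)]$ for $0<p\le\infty$. Then for every $0<p\le\infty$ and all $K_1,\dots,K_n\ge0$, $$\sum_{i=1}^{n}\ \lim_{K_j\to\infty \text{ for all } j\neq i} V^p(K_1,\dots,K_n,0)=V^1(K_1,\dots,K_n,0).$$ The analogous identity holds for the payoff functions, i.e. for every $\bar{x}\in[0,\infty)^n$, $\sum_{i=1}^n \lim_{K_j\to\infty,\, j\ne i} h_p(\bar{x},K_1,\dots,K_n,0)=h_1(\bar{x},K_1,\dots,K_n,0)$, with the limits taken pointwise.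
   Context: Market model with deterministic interest rate, normalized to zero, so the price of a European option with payoff $f(\bar{X}_T)$ is $\mathbb{E}_{\mathbb{Q}}[f(\bar{X}_T)]$ under a (not necessarily unique) pricing measure $\mathbb{Q}$; $\bar{X}_T$ is the vector of asset prices at maturity. The option prices $V^p$ are assumed finite. $y^+=\max(y,0)$. *)

From HB Require Import structures.
From mathcomp Require Import all_boot all_order all_algebra.
From mathcomp Require Import all_classical all_reals all_analysis.
Set Implicit Arguments. Unset Strict Implicit. Unset Printing Implicit Defensive.
Import Order.TTheory GRing.Theory Num.Theory.
Local Open Scope ring_scope.

(* Payoff h_p(x, Kb, K) for p in (0, +oo]; p : \bar R.
   Finite p = r:  ( (sum_i ((x_i - Kb_i)^+)^r)^(1/r) - K )^+
   p = +oo     :  ( max_i (x_i - Kb_i)^+ - K )^+   (the pointwise limit, as in the paper)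
   p = -oo is irrelevant (never used, returns 0). *)
Definition hpay (R : realType) (n : nat) (p : \bar R)
    (x Kb : 'I_n -> R) (K : R) : R :=
  match p with
  | EFin r => Num.max (((\sum_(i < n) (Num.max (x i - Kb i) 0) `^ r) `^ r^-1) - K) 0
  | +oo%E => Num.max ((\big[Num.max/0]_(i < n) Num.max (x i - Kb i) 0) - K) 0
  | -oo%E => 0
  end.

Definition Vprice (R : realType) (d : measure_display) (T : measurableType d)
    (Q : probability T R) (n : nat) (X : 'I_n -> T -> R) (p : \bar R)
    (Kb : 'I_n -> R) (K : R) : R :=
  Rintegral Q setT (fun w => hpay p (fun i => X i w) Kb K).

Definition lim_others_infty (R : realType) (n : nat)
    (f : ('I_n -> R) -> R) (i : 'I_n) (K : 'I_n -> R) (L : R) : Prop :=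
  forall e : R, 0 < e -> exists M : R, forall K' : 'I_n -> R,
    (forall j, 0 <= K' j) -> K' i = K i ->
    (forall j, j != i -> M <= K' j) -> `|f K' - L| < e.

From HB Require Import structures.
From mathcomp Require Import all_boot all_order all_algebra.
From mathcomp Require Import all_classical all_reals all_analysis.
From mathcomp Require Import measurable_realfun lra.
Set Implicit Arguments. Unset Strict Implicit. Unset Printing Implicit Defensive.
Import Order.TTheory GRing.Theory Num.Theory.
Local Open Scope ring_scope.

(* Once every strike K_j with j <> i exceeds sum_k |x_k|, only the i-th leg
   of the basket is in the money, so h_p(x, K, 0) is the single call
   (x_i - K_i)^+ whatever p is: the payoff limits are eventually constant,
   and summing the calls gives h_1.  For the prices, h_p(X, K, 0) and the
   call both lie in [0, h_p(X, 0, 0)] and agree off the event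
   {sum_k |X_k| > N}, so they differ by at most E[h_p(X, 0, 0); sum_k |X_k| > N],
   which tends to 0 by dominated convergence. *)

Definition call (R : realDomainType) (x K : R) : R := Num.max (x - K) 0.

Lemma call_ge0 (R : realDomainType) (x K : R) : 0 <= call x K.
Proof. by rewrite /call le_max lexx orbT. Qed.

Lemma le_sum_normr (R : realDomainType) (n : nat) (x : 'I_n -> R) (j : 'I_n) :
  x j <= \sum_(k < n) `|x k|.
Proof.
rewrite (bigD1 j) //=; apply: le_trans (ler_norm (x j)) _.
by rewrite lerDl; apply: sumr_ge0 => k _.
Qed.

Section Payoff.
Variables (R : realType) (n : nat).
Implicit Types (p : \bar R) (x Kb : 'I_n -> R).

Lemma hpay_ge0 p x Kb K : 0 <= hpay p x Kb K.
Proof. by case: p => [r||] //=; rewrite le_max lexx orbT. Qed.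

Lemma hpay1 x Kb : hpay 1%:E x Kb 0 = \sum_(i < n) call (x i) (Kb i).
Proof.
rewrite /= invr1 (eq_bigr (fun i => call (x i) (Kb i))); last first.
  by move=> j _; rewrite powRr1 // call_ge0.
have sum_ge0 : 0 <= \sum_(i < n) call (x i) (Kb i).
  by apply: sumr_ge0 => j _; exact: call_ge0.
by rewrite powRr1 // subr0; apply/max_idPl.
Qed.

Lemma hpay_otm_others p x Kb (i : 'I_n) :
  (0 < p)%E -> (forall j, j != i -> x j <= Kb j) ->
  hpay p x Kb 0 = call (x i) (Kb i).
Proof.
move=> p_gt0 otm.
have otm0 j : j != i -> Num.max (x j - Kb j) 0 = 0.
  by move=> /otm ?; apply/max_idPr; rewrite subr_le0.
case: p p_gt0 => [r||] //= r_gt0.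
  rewrite lte_fin in r_gt0.
  rewrite (bigD1 i) //= big1; last by move=> j /otm0 ->; rewrite powR0 // gt_eqF.
  rewrite addr0 -powRrM mulfV ?gt_eqF // powRr1 ?call_ge0 // subr0.
  by apply/max_idPl; exact: call_ge0.
have -> : \big[Num.max/0]_(j < n) call (x j) (Kb j) = call (x i) (Kb i).
  apply/le_anti/andP; split; last exact: (le_bigmax _ (fun j => call (x j) (Kb j)) i).
  apply: bigmax_le => [|j _]; first exact: call_ge0.
  have [->//|ji] := eqVneq j i.
  by rewrite /call otm0 //; exact: call_ge0.
by rewrite subr0; apply/max_idPl; exact: call_ge0.
Qed.

Lemma hpay_antitone p x Kb Kb' K :
  (0 < p)%E -> (forall j, Kb j <= Kb' j) -> hpay p x Kb' K <= hpay p x Kb K.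
Proof.
move=> p_gt0 le_Kb.
have le_call j : call (x j) (Kb' j) <= call (x j) (Kb j).
  by rewrite /call; apply: le_max2; [exact: lerB|exact: lexx].
case: p p_gt0 => [r||] r_gt0; rewrite /hpay; last by [].
  rewrite lte_fin in r_gt0.
  have pow_ge0 y : 0 <= y `^ r by exact: powR_ge0.
  apply: le_max2; last exact: lexx.
  rewrite lerD2r; apply: ge0_ler_powR.
  - by rewrite invr_ge0 ltW.
  - by rewrite nnegrE; apply: sumr_ge0.
  - by rewrite nnegrE; apply: sumr_ge0.
  apply: ler_sum => j _.
  by apply: ge0_ler_powR; [exact: ltW|exact: call_ge0|exact: call_ge0|exact: le_call].
apply: le_max2; last exact: lexx.
by rewrite lerD2r; apply: le_bigmax2 => j _; exact: le_call.
Qed.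

Lemma call_le_hpay p x Kb (i : 'I_n) :
  (0 < p)%E -> call (x i) (Kb i) <= hpay p x Kb 0.
Proof.
move=> p_gt0.
pose Kb' j := if j == i then Kb i else Num.max (x j) (Kb j).
have <- : hpay p x Kb' 0 = call (x i) (Kb i).
  rewrite (@hpay_otm_others _ _ _ i) // /Kb' ?eqxx // => j /negbTE ->.
  by rewrite le_max lexx.
apply: hpay_antitone => // j; rewrite /Kb'.
by have [->|_] := eqVneq j i; rewrite ?le_max lexx ?orbT.
Qed.

Lemma hpay_lim_others p x Kb (i : 'I_n) : (0 < p)%E ->
  lim_others_infty (fun K' => hpay p x K' 0) i Kb (call (x i) (Kb i)).
Proof.
move=> p_gt0 e e_gt0; exists (\sum_(k < n) `|x k|) => K' _ K'i K'_ge.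
rewrite (@hpay_otm_others _ _ _ i) // => [|j /K'_ge]; first by rewrite K'i subrr normr0.
exact: le_trans (le_sum_normr x j).
Qed.

End Payoff.

Section Integral.
Context (d : measure_display) (T : measurableType d) (R : realType).
Variable mu : {measure set T -> \bar R}.

Lemma Rintegral_sum (I : Type) (f : I -> T -> R) (s : seq I) :
  (forall i, mu.-integrable setT (EFin \o f i)) ->
  Rintegral mu setT (fun x => \sum_(i <- s) f i x) =
  \sum_(i <- s) Rintegral mu setT (f i).
Proof.
move=> f_int; elim: s => [|a s IH].
  under eq_fun do rewrite big_nil.
  by rewrite big_nil Rintegral_cst // mul0r.
under eq_fun do rewrite big_cons.
rewrite big_cons RintegralD // ?IH //.
apply: eq_integrable measurableT _ _ _ (integrable_sum measurableT s (fun i _ => f_int i)).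
by move=> x _ /=; rewrite sumEFin.
Qed.

Lemma Rintegral_dist_le (u v f : T -> R) :
  mu.-integrable setT (EFin \o u) -> mu.-integrable setT (EFin \o v) ->
  mu.-integrable setT (EFin \o f) -> (forall x, `|u x - v x| <= f x) ->
  `|Rintegral mu setT u - Rintegral mu setT v| <= Rintegral mu setT f.
Proof.
move=> u_int v_int f_int le_uv.
have uv_int : mu.-integrable setT (EFin \o (fun x => u x - v x)).
  apply: eq_integrable measurableT _ _ _ (integrableB measurableT u_int v_int).
  by move=> x _ /=; rewrite EFinB.
rewrite -RintegralB //; apply: le_trans (le_normr_Rintegral measurableT uv_int) _.
by apply: le_Rintegral => //; exact: (integrable_norm uv_int).
Qed.

Definition tail_part (S g : T -> R) (m : R) (x : T) : R :=
  if m < S x then g x else 0.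

Section TailPart.
Variables (S g : T -> R).
Hypotheses (g_ge0 : forall x, 0 <= g x) (g_int : mu.-integrable setT (EFin \o g))
  (mS : measurable_fun setT S).

Lemma tail_part_ge0 m x : 0 <= tail_part S g m x.
Proof. by rewrite /tail_part; case: ifP. Qed.

Lemma tail_part_le m x : tail_part S g m x <= g x.
Proof. by rewrite /tail_part; case: ifP. Qed.

Lemma integrable_tail_part m : mu.-integrable setT (EFin \o tail_part S g m).
Proof.
have mg : measurable_fun setT g by case/integrableP: g_int => /measurable_EFinP.
apply: (le_integrable measurableT) g_int => [|x _] /=.
  apply/measurable_EFinP/measurable_fun_ifT => //.
  by apply: measurable_fun_ltr => //; exact: measurable_cst.
by rewrite lee_fin !ger0_norm ?tail_part_ge0 ?tail_part_le.
Qed.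

Lemma Rintegral_tail_part_cvg0 :
  ((fun m : nat => Rintegral mu setT (tail_part S g m%:R)) @ \oo --> 0)%classic.
Proof.
pose f (m : nat) := EFin \o tail_part S g m%:R.
have mf m : measurable_fun setT (f m).
  by case/integrableP: (integrable_tail_part m%:R).
have f_cvg0 : \forall x \ae mu, setT x ->
    ((fun m => f m x) @ \oo --> (cst 0%E : T -> \bar R) x)%classic.
  apply: aeW => x _; apply: cvg_near_cst.
  near=> m; rewrite /f /= /tail_part ifF //; apply/negbTE; rewrite -leNgt ltW //.
  by near: m; exact: nbhs_infty_gtr.
have f_dom : \forall x \ae mu, forall m, setT x -> (`|f m x| <= (EFin \o g) x)%E.
  by apply: aeW => x m _ /=; rewrite lee_fin ger0_norm ?tail_part_ge0 ?tail_part_le.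
have [_ _] := dominated_convergence measurableT mf (measurable_cst _) f_cvg0 g_int f_dom.
by rewrite integral0 => /fine_cvgP[].
Unshelve. all: by end_near.
Qed.

End TailPart.
End Integral.

Section Prices.
Context (d : measure_display) (T : measurableType d) (R : realType).
Variables (Q : probability T R) (n : nat) (X : 'I_n -> T -> R) (p : \bar R).
Hypotheses (p_gt0 : (0 < p)%E) (mX : forall i, measurable_fun setT (X i)).

Let payoff (Kb : 'I_n -> R) (w : T) : R := hpay p (fun j => X j w) Kb 0.

Lemma integrable_call (Kb : 'I_n -> R) (i : 'I_n) :
  Q.-integrable setT (EFin \o payoff Kb) ->
  Q.-integrable setT (EFin \o (fun w => call (X i w) (Kb i))).
Proof.
move=> h_int; apply: (le_integrable measurableT) h_int => [|w _] /=.
  apply/measurable_EFinP/measurable_maxr; last exact: measurable_cst.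
  by apply: measurable_funB => //; exact: measurable_cst.
by rewrite lee_fin !ger0_norm ?call_ge0 ?hpay_ge0 ?call_le_hpay.
Qed.

Lemma Vprice_lim_others (Kb : 'I_n -> R) (i : 'I_n) :
  (forall K', (forall j, 0 <= K' j) -> Q.-integrable setT (EFin \o payoff K')) ->
  (forall j, 0 <= Kb j) ->
  lim_others_infty (fun K' => Vprice Q X p K' 0) i Kb
    (Rintegral Q setT (fun w => call (X i w) (Kb i))).
Proof.
move=> h_int Kb_ge0 e e_gt0.
pose S w := \sum_(k < n) `|X k w|.
pose g := payoff (fun _ => 0).
have g_int := h_int _ (fun _ => lexx 0).
have mS : measurable_fun setT S.
  by apply: measurable_sum => k; exact: measurableT_comp (mX k).
have /cvgr_dist_lt/(_ e e_gt0)[N _ small_tail] :=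
  Rintegral_tail_part_cvg0 (fun w => hpay_ge0 _ _ _ _) g_int mS.
exists N%:R => K' K'_ge0 K'i K'_ge.
have a_le_g w : call (X i w) (Kb i) <= g w.
  apply: (le_trans (call_le_hpay (fun j => X j w) Kb i p_gt0)).
  exact: hpay_antitone.
have h_le_g w : payoff K' w <= g w by exact: hpay_antitone.
(* Off the tail event every leg but the i-th is out of the money. *)
have dist_le w : `|payoff K' w - call (X i w) (Kb i)| <= tail_part S g N%:R w.
  rewrite /tail_part; case: ltP => [_|S_le].
    have h_ge0 := hpay_ge0 p (fun j => X j w) K' 0.
    have a_ge0 := call_ge0 (X i w) (Kb i).
    have := a_le_g w; have := h_le_g w; rewrite /payoff ler_distl => ? ?.
    by apply/andP; split; lra.
  rewrite /payoff (@hpay_otm_others _ _ _ _ _ i) // ?K'i ?subrr ?normr0 // => j /K'_ge.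
  by move=> K'j; apply: le_trans (le_trans S_le K'j); exact: le_sum_normr.
have g_ge0 w : 0 <= g w by exact: hpay_ge0.
have tail_int := integrable_tail_part g_ge0 g_int mS N%:R.
have a_int := integrable_call i (h_int _ Kb_ge0).
apply: le_lt_trans (Rintegral_dist_le (h_int _ K'_ge0) a_int tail_int dist_le) _.
have := small_tail N (leqnn N); rewrite sub0r normrN ger0_norm //.
by apply: (@Rintegral_ge0 _ _ _ Q setT) => w _; exact: (tail_part_ge0 S g_ge0).
Qed.

End Prices.

Theorem mainTheorem2 (R : realType) (d : measure_display) (T : measurableType d)
    (Q : probability T R) (n : nat) (X : 'I_n -> T -> R) :
  (0 < n)%N ->
  (forall i, measurable_fun setT (X i)) ->
  (forall i w, 0 <= X i w) ->
  (* all option prices V^q(Kb, 0), 0 < q <= oo, Kb >= 0, are finite *)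
  (forall (q : \bar R) (Kb : 'I_n -> R), (0 < q)%E -> (forall i, 0 <= Kb i) ->
     Q.-integrable setT (fun w => (hpay q (fun i => X i w) Kb 0)%:E)) ->
  forall (p : \bar R), (0 < p)%E ->
  forall (Kb : 'I_n -> R), (forall i, 0 <= Kb i) ->
    (exists L : 'I_n -> R,
       (forall i, lim_others_infty (fun K' => Vprice Q X p K' 0) i Kb (L i)) /\
       \sum_(i < n) L i = Vprice Q X (1%:E) Kb 0) /\
    (forall x : 'I_n -> R, (forall i, 0 <= x i) ->
     exists L : 'I_n -> R,
       (forall i, lim_others_infty (fun K' => hpay p x K' 0) i Kb (L i)) /\
       \sum_(i < n) L i = hpay (1%:E) x Kb 0).
Proof.
move=> _ mX _ h_int p p_gt0 Kb Kb_ge0; split.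
  exists (fun i => Rintegral Q setT (fun w => call (X i w) (Kb i))); split.
    by move=> i; apply: Vprice_lim_others => // K'; exact: h_int.
  rewrite /Vprice (eq_fun (fun w => hpay1 (fun j => X j w) Kb)).
  have one_gt0 : (0 < 1%:E :> \bar R)%E by rewrite lte_fin.
  rewrite Rintegral_sum // => i.
  exact: integrable_call one_gt0 mX Kb i (h_int _ Kb one_gt0 Kb_ge0).
move=> x _; exists (fun i => call (x i) (Kb i)); split; last by rewrite hpay1.
by move=> i; exact: hpay_lim_others.
Qed.
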